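(* Let $T$ be a bipartite trigraph in $\mathcal F$. Then: (1) $T$ is either complete or has an even pair; (2) if $T$ is favorable, then $T$ has an even pair disjoint from its switchable component.
   Context: A trigraph $T$ consists of a finite set $V(T)$ and a map $\theta:\binom{V(T)}{2}\to\{-1,0,1\}$. Two distinct vertices $u,v$ are strongly adjacent if $\theta(uv)=1$, strongly antiadjacent if $\theta(uv)=-1$, and semiadjacent (a switchable pair) if $\theta(uv)=0$; they are adjacent if $\theta(uv)\in\{0,1\}$ and antiadjacent if $\theta(uv)\in\{0,-1\}$. $N(v)$ is the set of vertices adjacent to $v$. For $X\subseteq V(T)$, $T|X$ is the trigraph on $X$ with $\theta$ restricted, and $T\setminus X=T|(V(T)\setminus X)$. A clique is a set of pairwise adjacent vertices; a strongly stable set is a set of pairwise strongly antiadjacent vertices; $T$ is complete if $V(T)$ is a clique. The full realization of $T$ is the graph on $V(T)$ whose edges are the adjacent pairs. A path is a sequence of distinct vertices $p_1,\dots,p_k$ such that $p_i,p_j$ are adjacent when $|i-j|=1$ and antiadjacent when $|i-j|>1$; its length is $k-1$. A hole of length $k\ge5$ consists of vertices $h_1,\dots,h_k$ with $h_i,h_j$ adjacent if $|i-j|\in\{1,k-1\}$ and antiadjacent otherwise; an antihole is an induced subtrigraph whose complement (adjacency function $-\theta$) is a hole. $T$ is Berge if it contains no hole of odd length and no antihole of odd length. An even pair of $T$ is a strongly antiadjacent pair $\{u,v\}$ such that every path from $u$ to $v$ in $T$ has even length. $\Sigma(T)$ is the graph on $V(T)$ whose edges are the switchable pairs of $T$; a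 switchable component is a connected component of $\Sigma(T)$ with at least two vertices. $\mathcal F$ is the class of Berge trigraphs $T$ such that: (1) $T$ has at most one switchable component, and it has at most two edges; (2) if the switchable component has exactly one edge $xy$, then $N(x)\cap N(y)=\emptyset$ (it is called small); (3) if it has two edges, with $v$ the vertex of degree two in $\Sigma(T)$ and $x,y$ its neighbours, then $v$ is strongly anticomplete to $V(T)\setminus\{v,x,y\}$, $x$ is strongly antiadjacent to $y$, and $N(x)\cap N(y)=\{v\}$ (it is called light). For $T\in\mathcal F$, $D$ denotes the vertex set of its switchable component ($D=\emptyset$ if $T$ has no switchable pair). A pair $\{u,v\}$ is disjoint from the switchable component if $\{u,v\}\cap D=\emptyset$. A trigraph $T\in\mathcal F$ is favorable if (1) $|V(T)|\ge5$; (2) $T$ has a strongly antiadjacent pair $\{u,v\}$ disjoint from $D$; and (3) if $D=\{x,y\}$ is small, then at least one of $V(T)\setminus(D\cup N(x))$, $V(T)\setminus(D\cup N(y))$ is not a clique. $T$ is bipartite if $V(T)$ can be partitioned into two strongly stable sets. *)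

From mathcomp Require Import all_boot.
Set Implicit Arguments. Unset Strict Implicit. Unset Printing Implicit Defensive.

(* Values of theta: Plus = 1 (strongly adjacent), Zero = 0 (semiadjacent),
   Minus = -1 (strongly antiadjacent). *)
Inductive tval := Plus | Zero | Minus.

(* A trigraph on the finite vertex set V: a symmetric theta on pairs of
   vertices; the value of theta on the diagonal is never used. *)
Record trigraph (V : finType) := Trigraph {
  theta : V -> V -> tval;
  theta_sym : forall u v, theta u v = theta v u }.

Section Defs.
Variables (V : finType) (T : trigraph V).

Definition strongly_adjacent (u v : V) := u <> v /\ theta T u v = Plus.
Definition strongly_antiadjacent (u v : V) := u <> v /\ theta T u v = Minus.
Definition semiadjacent (u v : V) := u <> v /\ theta T u v = Zero.
Definition adjacent (u v : V) := u <> v /\ theta T u v <> Minus.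
Definition antiadjacent (u v : V) := u <> v /\ theta T u v <> Plus.

Definition is_zero (t : tval) : bool := if t is Zero then true else false.
Definition is_minus (t : tval) : bool := if t is Minus then true else false.
Definition semiadjb (u v : V) : bool := (u != v) && is_zero (theta T u v).
Definition adjb (u v : V) : bool := (u != v) && ~~ is_minus (theta T u v).

Definition nbhd (v : V) : {set V} := [set u | adjb v u].

Definition clique (X : {set V}) :=
  forall u v, u \in X -> v \in X -> u <> v -> adjacent u v.
Definition strongly_stable (X : {set V}) :=
  forall u v, u \in X -> v \in X -> u <> v -> strongly_antiadjacent u v.
Definition complete := clique [set: V].

Definition is_path (k : nat) (f : 'I_k -> V) :=
  injective f /\
  forall i j : 'I_k,
    (((i : nat).+1 = j \/ (j : nat).+1 = i) -> adjacent (f i) (f j)) /\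
    (((i : nat).+1 < j \/ (j : nat).+1 < i) -> antiadjacent (f i) (f j)).

Definition cyc_adj (k i j : nat) : bool :=
  [|| i.+1 == j, j.+1 == i, (i == 0) && (j == k.-1) | (j == 0) && (i == k.-1)].

Definition is_hole (k : nat) (f : 'I_k -> V) :=
  5 <= k /\ injective f /\
  forall i j : 'I_k, i <> j ->
    (cyc_adj k i j -> adjacent (f i) (f j)) /\
    (~~ cyc_adj k i j -> antiadjacent (f i) (f j)).

(* antihole: the complement (theta negated) is a hole; adjacency in the
   complement is antiadjacency in T and vice versa *)
Definition is_antihole (k : nat) (f : 'I_k -> V) :=
  5 <= k /\ injective f /\
  forall i j : 'I_k, i <> j ->
    (cyc_adj k i j -> antiadjacent (f i) (f j)) /\
    (~~ cyc_adj k i j -> adjacent (f i) (f j)).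

Definition berge :=
  (~ exists k (f : 'I_k -> V), odd k /\ is_hole f) /\
  (~ exists k (f : 'I_k -> V), odd k /\ is_antihole f).

Definition even_pair (u v : V) :=
  strongly_antiadjacent u v /\
  forall k (f : 'I_k.+1 -> V), is_path f -> f ord0 = u -> f ord_max = v ->
    ~~ odd k.

Definition sw_edges : {set {set V}} :=
  [set [set x; y] | x in V, y in V & semiadjb x y].

Definition swD : {set V} := [set v | [exists u, semiadjb v u]].

Definition in_F :=
  berge /\
  (* (1) at most one switchable component, with at most two edges *)
  (forall x y, x \in swD -> y \in swD -> connect semiadjb x y) /\
  #|sw_edges| <= 2 /\
  (forall x y, semiadjacent x y -> #|sw_edges| = 1 ->
      nbhd x :&: nbhd y = set0) /\
  (forall v x y, #|sw_edges| = 2 -> x <> y -> semiadjacent v x -> semiadjacent v y ->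
      (forall w, w \notin [set v; x; y] -> strongly_antiadjacent v w) /\
      strongly_antiadjacent x y /\
      nbhd x :&: nbhd y = [set v]).

Definition favorable :=
  5 <= #|V| /\
  (exists u v, strongly_antiadjacent u v /\ u \notin swD /\ v \notin swD) /\
  (forall x y, semiadjacent x y -> #|sw_edges| = 1 ->
     ~ clique (~: (swD :|: nbhd x)) \/ ~ clique (~: (swD :|: nbhd y))).

Definition bipartite :=
  exists A : {set V}, strongly_stable A /\ strongly_stable (~: A).

End Defs.

From mathcomp Require Import all_boot zify.
From Stdlib Require Import Classical.
Set Implicit Arguments. Unset Strict Implicit. Unset Printing Implicit Defensive.

(* Fix a bipartition (S, ~: S) of T into strongly stable sets.  Adjacent
   vertices lie on opposite sides, so along any path the side alternates and
   the parity of the length of a path is determined by the sides of its ends.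
   Hence two distinct vertices on the same side form an even pair, while for a
   strongly antiadjacent pair u, w on opposite sides any path from u to w has
   odd length >= 3: its second vertex p is a neighbour of u on the side of w,
   and its penultimate vertex q is a neighbour of w on the side of u.

   (1) If T is not complete it has a strongly antiadjacent pair u, v; either
   some side contains two vertices, or every side has one vertex, and then the
   vertex p above would share a side with v: so u, v is an even pair.
   (2) If T is favorable, either a side contains two vertices outside D, or
   at most two vertices lie outside D; then |D| >= 3 forces the switchable
   component to be light with centre x, and every vertex of D with a
   neighbour outside D is one of the two leaves of x, which lie on the same
   side.  For the pair u, v outside D given by favorability, the vertices
   p and q above are such attachments lying on opposite sides: contradiction. *)

Lemma connect_exit (W : finType) (e : rel W) (X : {set W}) a t :
  connect e a t -> a \in X -> t \notin X ->
  exists x y, [/\ e x y, x \in X & y \notin X].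
Proof.
move=> /connectP [p]; elim: p a => [|b p IH] a /=; first by move=> _ -> aX; rewrite aX.
case/andP=> eab pth tl aX; case bX: (b \in X); first exact: IH pth tl bX.
by exists a, b; rewrite bX.
Qed.

Lemma not_complete_antiadjacent (V : finType) (T : trigraph V) :
  ~ complete T -> exists u v, strongly_antiadjacent T u v.
Proof.
move=> not_complete; apply: NNPP => none; apply: not_complete => u v _ _ uv.
split=> // th; apply: none; exists u, v.
by split=> //; case: (theta T u v) th.
Qed.

Section SwitchableComponent.
Variables (V : finType) (T : trigraph V).

Lemma semiadjbP x y : semiadjb T x y -> semiadjacent T x y.
Proof.
by rewrite /semiadjb /semiadjacent; case: (theta T x y); rewrite ?andbT ?andbF // => /eqP.
Qed.

Lemma semiadjb_adjacent x y : semiadjb T x y -> adjacent T x y.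
Proof. by case/semiadjbP=> xy th; split=> //; rewrite th. Qed.

Lemma semiadjbC x y : semiadjb T x y = semiadjb T y x.
Proof. by rewrite /semiadjb theta_sym eq_sym. Qed.

Lemma semiadjb_swD x y : semiadjb T x y -> x \in swD T.
Proof. by move=> xy; rewrite inE; apply/existsP; exists y. Qed.

Lemma sw_edgeP x y : semiadjb T x y -> [set x; y] \in sw_edges T.
Proof. by move=> xy; apply/imset2P; exists x y; rewrite ?inE. Qed.

Lemma sw_edgeE e : e \in sw_edges T -> exists x y, semiadjb T x y /\ e = [set x; y].
Proof. by case/imset2P=> x y _; rewrite inE => /andP [_ xy] ->; exists x, y. Qed.

Lemma swD_card : #|swD T| <= 2 * #|sw_edges T|.
Proof.
have sub : swD T \subset cover (sw_edges T).
  apply/subsetP=> z; rewrite inE => /existsP [c zc].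
  by apply/bigcupP; exists [set z; c]; rewrite ?sw_edgeP ?set21.
apply: leq_trans (subset_leq_card sub) _; apply: leq_trans (leq_card_cover _) _.
rewrite mulnC -sum_nat_const; apply: leq_sum => e /sw_edgeE [x [y [_ ->]]].
by rewrite cards2; case: (x != y).
Qed.

Lemma light_swD x x' y : #|sw_edges T| = 2 -> x' <> y ->
  semiadjb T x x' -> semiadjb T x y -> swD T \subset [set x; x'; y].
Proof.
move=> E2 x'y xx' xy.
have ne : [set x; x'] != [set x; y].
  apply/negP=> /eqP exy; have : y \in [set x; x'] by rewrite exy set22.
  case/set2P=> [yx | /esym //]; by move: xy; rewrite /semiadjb yx eqxx.
have edges : sw_edges T = [set [set x; x']; [set x; y]].
  apply/esym/eqP; rewrite eqEcard cards2 ne E2 andbT.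
  by apply/subsetP=> e /set2P [] ->; apply: sw_edgeP.
apply/subsetP=> z; rewrite inE => /existsP [c /sw_edgeP].
rewrite edges => /set2P [] ez; have := set21 z c; rewrite ez !inE;
  by case/orP=> ->; rewrite ?orbT.
Qed.

Hypothesis swD_connected :
  forall x y, x \in swD T -> y \in swD T -> connect (semiadjb T) x y.

Lemma two_edges_center : #|sw_edges T| = 2 ->
  exists x x' y, [/\ x' <> y, semiadjb T x x' & semiadjb T x y].
Proof.
move=> E2; have [e eE] : exists e, e \in sw_edges T.
  by apply/set0Pn; rewrite -card_gt0 E2.
have [a [b [ab eab]]] := sw_edgeE eE; subst e.
have [e' e'E e'ab] : exists2 e', e' \in sw_edges T & e' \notin [set [set a; b]].
  apply/subsetPn; apply: contraTN isT => /subset_leq_card; by rewrite E2 cards1.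
have [c [d [cd e'cd]]] := sw_edgeE e'E.
have [t tcd tab] : exists2 t, t \in [set c; d] & t \notin [set a; b].
  apply/subsetPn; apply: contra e'ab => sub.
  have [/andP [ne_ab _] /andP [ne_cd _]] := (ab, cd).
  by rewrite inE e'cd eqEcard sub !cards2 ne_ab ne_cd.
have tD : t \in swD T.
  case/set2P: tcd => ->; first exact: semiadjb_swD cd.
  by rewrite semiadjbC in cd; exact: semiadjb_swD cd.
have [x [y [xy xab yab]]] := connect_exit (swD_connected (semiadjb_swD ab) tD) (set21 a b) tab.
case/set2P: xab => ->{x} in xy *.
- by exists a, b, y; split=> // ey; move: yab; rewrite -ey set22.
- by exists b, a, y; rewrite semiadjbC; split=> // ay; move: yab; rewrite -ay set21.
Qed.

End SwitchableComponent.

Section Bipartition.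
Variables (V : finType) (T : trigraph V) (S : {set V}).
Hypotheses (stS : strongly_stable T S) (stC : strongly_stable T (~: S)).

Lemma adjacent_sides a b : adjacent T a b -> (b \in S) = ~~ (a \in S).
Proof.
move=> [ab th]; case: (boolP (a \in S)) => aS; case: (boolP (b \in S)) => bS //.
  by case: (stS aS bS ab).
by case: (@stC a b) => //; rewrite in_setC.
Qed.

Lemma path_sides k (f : 'I_k.+1 -> V) : is_path T f ->
  forall i, i <= k -> (f (inord i) \in S) = (f ord0 \in S) (+) odd i.
Proof.
move=> [_ hf]; elim=> [|i IH] ik.
  by rewrite addbF; congr (f _ \in S); apply: val_inj; rewrite /= inordK.
have adj : adjacent T (f (inord i)) (f (inord i.+1)).
  by apply: (hf _ _).1; left; rewrite !inordK //; lia.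
by rewrite (adjacent_sides adj) IH ?addbN //; lia.
Qed.

Lemma path_length_parity k (f : 'I_k.+1 -> V) : is_path T f ->
  odd k = ((f ord0 \in S) != (f ord_max \in S)).
Proof.
move=> fP; have := path_sides fP (leqnn k).
have -> : (inord k : 'I_k.+1) = ord_max by apply: val_inj; rewrite /= inordK.
by move=> ->; case: (f ord0 \in S); case: (odd k).
Qed.

Lemma same_side_even_pair a b : a <> b -> (a \in S) = (b \in S) -> even_pair T a b.
Proof.
move=> ab eab; split=> [|k f fP f0 fk].
  case: (boolP (a \in S)) => aS; first by apply: stS; rewrite -?eab.
  by apply: stC; rewrite // in_setC -?eab.
by rewrite (path_length_parity fP) f0 fk eab eqxx.
Qed.

(* A strongly antiadjacent pair u, w on opposite sides is even unless some
   neighbour p of u lies on the side of w and some neighbour q of w on the side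
   of u (the second and penultimate vertices of an odd path). *)
Lemma cross_even_pair u w : strongly_antiadjacent T u w -> (u \in S) != (w \in S) ->
  (forall p q, [/\ adjacent T u p, p <> w & (p \in S) = (w \in S)] ->
               [/\ adjacent T w q, q <> u & (q \in S) = (u \in S)] -> False) ->
  even_pair T u w.
Proof.
move=> [uw th] sides no_ends; split=> // k f fP f0 fk; exfalso.
have ok : odd k by rewrite (path_length_parity fP) f0 fk.
have [finj hf] := fP.
have k_neq1 : k != 1.
  apply/eqP=> k1; have [_] := (hf ord0 ord_max).1 (or_introl (esym k1)).
  by rewrite f0 fk th.
have k_gt1 : 1 < k by move: ok k_neq1; case: (k) => [|[|]].
have sideP i : i <= k -> (f (inord i) \in S) = (u \in S) (+) odd i.
  by move=> ik; rewrite (path_sides fP ik) f0.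
apply: (no_ends (f (inord 1)) (f (inord k.-1))); split.
- by rewrite -f0; apply: (hf _ _).1; left; rewrite /= inordK //; lia.
- by rewrite -fk => /finj/(congr1 val); rewrite /= inordK //; lia.
- rewrite (sideP 1 (ltnW k_gt1)) /=; move: sides.
  by case: (u \in S); case: (w \in S).
- by rewrite -fk; apply: (hf _ _).1; right; rewrite /= inordK //; lia.
- by rewrite -f0 => /finj/(congr1 val); rewrite /= inordK //; lia.
- by rewrite sideP ?leq_pred // -subn1 oddB ?ok ?addbF //; lia.
Qed.

Definition separated (X : {set V}) :=
  forall a b, a \in X -> b \in X -> a <> b -> (a \in S) != (b \in S).

Lemma even_pair_or_separated (X : {set V}) :
  (exists a b, [/\ a \in X, b \in X & even_pair T a b]) \/ separated X.
Proof.
case: (classic (exists a b, [/\ a \in X, b \in X, a <> b & (a \in S) = (b \in S)])).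
  by move=> [a [b [aX bX ab eab]]]; left; exists a, b; split=> //; exact: same_side_even_pair.
move=> none; right=> a b aX bX ab; apply/negP=> /eqP eab.
by apply: none; exists a, b.
Qed.

(* A separated set has at most one vertex per side. *)
Lemma separated_card (X : {set V}) : separated X -> #|X| <= 2.
Proof.
move=> sep; rewrite -card_bool.
apply: (@leq_card_in _ _ (fun z => z \in S)) => a b aX bX eab.
by case: (eqVneq a b) => // /eqP ab; move: (sep a b aX bX ab); rewrite eab eqxx.
Qed.

Lemma complete_or_even_pair : complete T \/ exists u v, even_pair T u v.
Proof.
case: (classic (complete T)) => [|/not_complete_antiadjacent [u [v uv]]]; [by left|right].
have [[a [b [_ _ ab]]]|sep] := even_pair_or_separated [set: V]; first by exists a, b.
have sepP a b : a <> b -> (a \in S) != (b \in S) by apply: sep; rewrite inE.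
exists u, v; apply: cross_even_pair => //; first by apply: sepP; case: uv.
by move=> p q [_ pv pS] _; move: (sepP p v pv); rewrite pS eqxx.
Qed.

(* In a light component, every vertex of D adjacent to a vertex outside D is a
   leaf of the centre x, hence on the side opposite to x. *)
Lemma light_attachments_same_side : in_F T -> #|sw_edges T| = 2 ->
  forall u p w q, u \notin swD T -> p \in swD T -> adjacent T u p ->
    w \notin swD T -> q \in swD T -> adjacent T w q -> (p \in S) = (q \in S).
Proof.
case=> _ [conn [_ [_ light]]] E2.
have [x [x' [y [x'y xx' xy]]]] := two_edges_center conn E2.
have [anti _] := light x x' y E2 x'y (semiadjbP xx') (semiadjbP xy).
have centerD : [set x; x'; y] \subset swD T.
  apply/subsetP=> z /setUP [/set2P [] | /set1P] ->.
  - exact: semiadjb_swD xx'.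
  - by rewrite semiadjbC in xx'; exact: semiadjb_swD xx'.
  - by rewrite semiadjbC in xy; exact: semiadjb_swD xy.
have attached z o : o \notin swD T -> z \in swD T -> adjacent T o z ->
    (z \in S) = ~~ (x \in S).
  move=> oD zD [_ oz]; have oX : o \notin [set x; x'; y].
    by apply: contra oD; apply: (subsetP centerD).
  move: (subsetP (light_swD E2 x'y xx' xy) z zD) => /setUP [/set2P [] | /set1P] ez; subst z.
  - by have [_] := anti o oX; rewrite theta_sym.
  - exact: adjacent_sides (semiadjb_adjacent xx').
  - exact: adjacent_sides (semiadjb_adjacent xy).
by move=> u p w q uD pD up wD qD wq; rewrite (attached p u) ?(attached q w).
Qed.

Lemma favorable_even_pair : in_F T -> favorable T ->
  exists u v, even_pair T u v /\ u \notin swD T /\ v \notin swD T.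
Proof.
move=> hF [big [[u [v [uv [uD vD]]]] _]].
have [[a [b [aX bX ab]]]|sep] := even_pair_or_separated (~: swD T).
  by exists a, b; rewrite -!in_setC.
have inD z o : z <> o -> o \notin swD T -> (z \in S) = (o \in S) -> z \in swD T.
  move=> zo oD zoS; apply: contraT => zD.
  by move: (sep z o); rewrite !in_setC zoS eqxx => /(_ zD oD zo).
have uvS : (u \in S) != (v \in S) by apply: sep; rewrite ?in_setC //; case: uv.
exists u, v; split=> //; apply: cross_even_pair => // p q [up pv pS] [vq qu qS].
have E2 : #|sw_edges T| = 2.
  have [_ [_ [E_le2 _]]] := hF.
  have := separated_card sep; have := swD_card T; have := cardsC (swD T); lia.
have := light_attachments_same_side hF E2 uD (inD p v pv vD pS) up vD (inD q u qu uD qS) vq.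
by rewrite pS qS => evu; move: uvS; rewrite evu eqxx.
Qed.
End Bipartition.

Theorem theorem4p2 (V : finType) (T : trigraph V) :
  in_F T -> bipartite T ->
  (complete T \/ exists u v, even_pair T u v) /\
  (favorable T ->
     exists u v, even_pair T u v /\ u \notin swD T /\ v \notin swD T).
Proof.
move=> hF [S [stS stC]]; split; first exact: complete_or_even_pair stS stC.
exact: favorable_even_pair stS stC hF.
Qed.
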